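(* Let $X$ be a finite-dimensional real Banach space and let $A \subset X$ be a bounded set with $d(0, A) > 0$. Let $I$ be an index set with $m$ elements and $\{x_i : i \in I\} \subset S_X$. If for every selection $\phi$ of the subdifferential mapping $\partial\|\cdot\|$ one has $\sup_{i \in I} \phi(x_i)(x) > 0$ for every $x \in \overline{A}$, then there exist $y_i \in \mathbb{R}^+ x_i$ and $r_i > 0$ with $\|y_i\| \ge r_i$ for all $i \in I$ such that $\{B(y_i, r_i)\}_{i \in I}$ covers $A$.
   Context: $d(0,A)=\inf\{\|a\|:a\in A\}$; $\overline{A}$ is the closure. $\mathbb{R}^+ x_i = \{ t x_i : t > 0\}$; $B(c,r) = \{ z : \|c - z\| < r\}$. $\partial\|x\| = \{ x^* \in S_{X^*} : x^*(x) = \|x\|\}$ for $x \neq 0$; a selection of $\partial\|\cdot\|$ is a map $\phi$ with $\phi(x) \in \partial\|x\|$ for each non-zero $x$. *)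

From HB Require Import structures.
From mathcomp Require Import all_boot all_order all_algebra.
From mathcomp Require Import all_classical all_reals all_analysis.
Set Implicit Arguments. Unset Strict Implicit. Unset Printing Implicit Defensive.
Import Order.TTheory GRing.Theory Num.Theory.
Import numFieldNormedType.Exports.
Local Open Scope classical_set_scope.
Local Open Scope ring_scope.

Section Defs.
Variables (R : realType) (X : normedModType R).

Definition finite_dim : Prop :=
  exists n (e : 'I_n -> X), forall x : X,
    exists c : 'I_n -> R, x = \sum_(i < n) c i *: e i.

Definition unit_sphere : set X := [set x | `|x| = 1].

Definition is_linear_functional (f : X -> R) : Prop :=
  forall (a : R) (x y : X), f (a *: x + y) = a * f x + f y.

Definition dual_norm (f : X -> R) : R :=
  sup [set `|f z| | z in [set z : X | `|z| <= 1]].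

Definition in_dual_sphere (f : X -> R) : Prop :=
  [/\ is_linear_functional f,
      has_ubound [set `|f z| | z in [set z : X | `|z| <= 1]]
    & dual_norm f = 1].

(* The subdifferential of the norm at x <> 0. *)
Definition subdiff_norm (x : X) : set (X -> R) :=
  [set f | in_dual_sphere f /\ f x = `|x|].

Definition subdiff_selection (phi : X -> (X -> R)) : Prop :=
  forall x : X, x != 0 -> subdiff_norm x (phi x).

Definition oball (c : X) (r : R) : set X := [set z | `|c - z| < r].

End Defs.

From HB Require Import structures.
From mathcomp Require Import all_boot all_order all_algebra.
From mathcomp Require Import all_classical all_reals all_analysis.
From mathcomp Require Import ring lra.
Import Order.TTheory GRing.Theory Num.Theory.
Import numFieldNormedType.Exports.
Local Open Scope classical_set_scope.
Local Open Scope ring_scope.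
Set Implicit Arguments. Unset Strict Implicit. Unset Printing Implicit Defensive.

(* If a point z of closure A lay in no ball B(t x_i, t), t > 0, every x_i would
   be at distance at least 1 from the ray R+ z.  Extending the functional
   s x_i |-> s dimension by dimension (Hahn-Banach, where each new value is a
   supremum) then yields a norming functional of x_i that is nonpositive at z;
   completing these functionals to a selection of the subdifferential contradicts
   the hypothesis.  So the open sets U_n = \bigcup_i B(n x_i, n), increasing in n,
   cover closure A, which is compact because X is finite-dimensional (by Baire's
   theorem, bounded vectors have bounded coordinates); hence one U_N covers A. *)

Section Domination.
Variables (R : realType) (X : normedModType R).

Definition dominated (D : set X) (f : X -> R) :=
  [/\ D 0, (forall a u v, D u -> D v -> D (a *: u + v)),
      (forall a u v, D u -> D v -> f (a *: u + v) = a * f u + f v) &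
      (forall u, D u -> f u <= `|u|)].

Definition line_ext (D : set X) (w : X) : set X :=
  [set u + t *: w | u in D & t in [set: R]].

Lemma line_ext_sub (D : set X) w : D `<=` line_ext D w.
Proof. by move=> u Du; exists u => //; exists 0 => //; rewrite scale0r addr0. Qed.

Lemma line_ext_mem (D : set X) w : D 0 -> line_ext D w w.
Proof. by move=> D0; exists 0 => //; exists 1 => //; rewrite add0r scale1r. Qed.

Variables (D : set X) (f : X -> R).
Hypothesis Df : dominated D f.

Lemma dominated0 : f 0 = 0.
Proof.
case: Df => D0 _ fl _; have := fl 1 0 0 D0 D0.
by rewrite scaler0 addr0 mul1r => h; apply: (addrI (f 0)); rewrite addr0 -h.
Qed.

Lemma dominatedZ a u : D u -> f (a *: u) = a * f u.
Proof.
by case: Df => D0 _ fl _ Du; rewrite -[a *: u]addr0 fl // dominated0 addr0.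
Qed.

Lemma dominatedD u v : D u -> D v -> f (u + v) = f u + f v.
Proof. by case: Df => _ _ fl _ Du Dv; rewrite -[u in LHS]scale1r fl // mul1r. Qed.

Lemma dominatedN u : D u -> f (- u) = - f u.
Proof. by move=> Du; rewrite -scaleN1r dominatedZ // mulN1r. Qed.

Lemma dominated_memZ a u : D u -> D (a *: u).
Proof. by case: Df => D0 Dl _ _ Du; rewrite -[_ *: _]addr0; apply: Dl. Qed.

Lemma dominated_memD u v : D u -> D v -> D (u + v).
Proof. by case: Df => _ Dl _ _ Du Dv; rewrite -[u]scale1r; apply: Dl. Qed.

Lemma dominated_memN u : D u -> D (- u).
Proof. by rewrite -scaleN1r; apply: dominated_memZ. Qed.

Lemma dominated_memB u v : D u -> D v -> D (u - v).
Proof. by move=> Du Dv; apply/dominated_memD/dominated_memN. Qed.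

Lemma dominated_norm u : D u -> `|f u| <= `|u|.
Proof.
case: Df => _ _ _ fn Du; rewrite ler_norml fn // andbT lerNl.
by have := fn _ (dominated_memN Du); rewrite dominatedN // normrN.
Qed.

Variable w : X.

(* Any value between this supremum and the infimum of `|v + w| - f v over D
   (see ext_value_sep) gives a dominated extension to line_ext D w. *)
Definition ext_value := sup [set f u - `|u - w| | u in D].

Lemma ext_value_sep u v : D u -> D v -> f u - `|u - w| <= `|v + w| - f v.
Proof.
move=> Du Dv; rewrite lerBrDr addrAC lerBlDr -dominatedD //.
case: Df => _ _ _ fn; apply: le_trans (fn _ (dominated_memD Du Dv)) _.
have -> : u + v = (u - w) + (v + w) by rewrite [v + w]addrC addrA subrK.
by rewrite addrC ler_normD.
Qed.

Lemma ext_value_ge u : D u -> f u - `|u - w| <= ext_value.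
Proof.
have [D0 _ _ _] := Df; move=> Du; apply: ub_le_sup; last by exists u.
by exists (`|0 + w| - f 0) => _ [v Dv <-]; apply: ext_value_sep.
Qed.

Lemma ext_value_le b : (forall u, D u -> f u - `|u - w| <= b) -> ext_value <= b.
Proof.
have [D0 _ _ _] := Df; move=> hb.
by apply: ge_sup; [exists (f 0 - `|0 - w|), 0 | move=> _ [u Du <-]; apply: hb].
Qed.

Lemma ext_value_le_sep v : D v -> ext_value <= `|v + w| - f v.
Proof. by move=> Dv; apply: ext_value_le => u Du; apply: ext_value_sep. Qed.

Lemma ext_value_mem : D w -> ext_value = f w.
Proof.
move=> Dw; apply/le_anti/andP; split.
  have := ext_value_le_sep (dominated_memN Dw).
  by rewrite addNr normr0 dominatedN // sub0r opprK.
by have := ext_value_ge Dw; rewrite subrr normr0 subr0.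
Qed.

Lemma ext_value_dominated u t : D u -> f u + t * ext_value <= `|u + t *: w|.
Proof.
move=> Du; have [tlt0|tgt0|->] := ltgtP t 0; last first.
- by rewrite mul0r addr0 scale0r addr0; case: Df => _ _ _; apply.
- have := ext_value_le_sep (dominated_memZ t^-1 Du).
  have -> : t^-1 *: u + w = t^-1 *: (u + t *: w).
    by rewrite scalerDr scalerA mulVf ?gt_eqF // scale1r.
  rewrite normrZ gtr0_norm ?invr_gt0 // dominatedZ // -mulrBr => h.
  rewrite -lerBrDl; have := ler_wpM2l (ltW tgt0) h.
  by rewrite mulrA mulfV ?gt_eqF // mul1r.
- have := ext_value_ge (dominated_memZ (- t)^-1 Du).
  have -> : (- t)^-1 *: u - w = (- t)^-1 *: (u + t *: w).
    by rewrite scalerDr scalerA invrN mulNr mulVf ?lt_eqF // scaleN1r.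
  have nt : 0 < - t by rewrite oppr_gt0.
  rewrite normrZ gtr0_norm ?invr_gt0 // dominatedZ // -mulrBr => h.
  have := ler_wpM2l (ltW nt) h.
  rewrite mulrA mulfV ?gt_eqF // mul1r => h2; lra.
Qed.

Lemma ext_value_consistent u1 t1 u2 t2 : D u1 -> D u2 ->
  u1 + t1 *: w = u2 + t2 *: w -> f u1 + t1 * ext_value = f u2 + t2 * ext_value.
Proof.
move=> Du1 Du2 E; have [et|ne] := eqVneq t1 t2.
  by move: E; rewrite et => /addIr ->.
have Dw : D w.
  have -> : w = (t1 - t2)^-1 *: (u2 - u1).
    apply/(@scalerI _ _ (t1 - t2)); first by rewrite subr_eq0.
    rewrite scalerA divff ?subr_eq0 // scale1r scalerBl.
    rewrite -[u2](addrK (t2 *: w)) -E.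
    by rewrite addrAC [u1 + _ - u1]addrAC subrr add0r.
  by apply/dominated_memZ/dominated_memB.
have Dtw t : D (t *: w) by apply: dominated_memZ.
by move/(congr1 f): E; rewrite ext_value_mem // !dominatedD // !dominatedZ.
Qed.

Lemma dominated_extend : exists g, [/\ dominated (line_ext D w) g,
  (forall u, D u -> g u = f u) & g w = ext_value].
Proof.
have /choice[g gE] : forall y, exists r : R,
    forall u t, D u -> y = u + t *: w -> r = f u + t * ext_value.
  move=> y; have [[u0 Du0 [t0 _ <-]]|nD] := pselect (line_ext D w y).
    by exists (f u0 + t0 * ext_value) => u t Du E; apply: ext_value_consistent.
  by exists 0 => u t Du E; exfalso; apply: nD; exists u => //; exists t.
have hg u t : D u -> g (u + t *: w) = f u + t * ext_value.
  by move=> Du; apply: gE.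
have [D0 Dl fl _] := Df.
have gw : g w = ext_value.
  by have := hg 0 1 D0; rewrite add0r scale1r dominated0 add0r mul1r.
have gD u : D u -> g u = f u.
  by move=> Du; have := hg u 0 Du; rewrite scale0r addr0 mul0r addr0.
exists g; split => //; split.
- by exists 0 => //; exists 0 => //; rewrite scale0r addr0.
- move=> a _ _ [u1 Du1 [t1 _ <-]] [u2 Du2 [t2 _ <-]].
  exists (a *: u1 + u2); first exact: Dl.
  by exists (a * t1 + t2) => //; rewrite scalerDr scalerDl scalerA addrACA.
- move=> a _ _ [u1 Du1 [t1 _ <-]] [u2 Du2 [t2 _ <-]].
  have -> : a *: (u1 + t1 *: w) + (u2 + t2 *: w) =
            (a *: u1 + u2) + (a * t1 + t2) *: w.
    by rewrite scalerDr scalerDl scalerA addrACA.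
  have Du12 : D (a *: u1 + u2) by apply: Dl.
  by rewrite !hg // fl //; ring.
- by move=> _ [u Du [t _ <-]]; rewrite hg //; apply: ext_value_dominated.
Qed.

End Domination.

Section HahnBanach.
Variables (R : realType) (X : normedModType R).
Implicit Types (D : set X) (f g : X -> R).

Lemma dominated_extend_seq D f (s : seq X) : dominated D f ->
  exists D' g, [/\ dominated D' g, D `<=` D', (forall u, D u -> g u = f u) &
                   (forall w, w \in s -> D' w)].
Proof.
elim: s D f => [|w s IH] D f Df; first by exists D, f; split.
have [D0 _ _ _] := Df.
have [f1 [Df1 f1E _]] := dominated_extend Df w.
have [D' [g [Dg sub' gE sD']]] := IH _ _ Df1.
have DD1 : D `<=` line_ext D w by apply: line_ext_sub.
exists D', g; split => //.
- by move=> u /DD1 /sub'.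
- by move=> u Du; rewrite gE ?f1E //; apply: DD1.
- move=> y; rewrite inE => /orP[/eqP ->|ys]; last exact: sD'.
  exact/sub'/line_ext_mem.
Qed.

Lemma dominated_extend_total D f : finite_dim X -> dominated D f ->
  exists g, dominated setT g /\ forall u, D u -> g u = f u.
Proof.
move=> [n [e span]] Df.
have [D' [g [Dg _ gE sD']]] :=
  dominated_extend_seq [seq e i | i <- enum 'I_n] Df.
suff D'T : D' = setT by exists g; split; rewrite -?D'T.
apply/seteqP; split => // u _; have [c ->] := span u.
apply: (big_ind D'); first by case: Dg.
  exact: dominated_memD Dg.
by move=> i _; apply/(dominated_memZ Dg)/sD'/map_f; rewrite mem_enum.
Qed.

Lemma dominated_in_dual_sphere g x : dominated setT g -> `|x| = 1 -> g x = 1 ->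
  in_dual_sphere g.
Proof.
move=> Dg nx gx; have [_ _ gl _] := Dg.
have gn u : `|g u| <= `|u| by apply: (dominated_norm Dg).
have hub : has_ubound [set `|g z| | z in [set z : X | `|z| <= 1]].
  by exists 1 => _ [z hz <-]; exact: le_trans (gn z) hz.
split => //; first by move=> a u v; apply: gl.
apply/le_anti/andP; split.
  apply: ge_sup; first by exists `|g 0|, 0 => //=; rewrite normr0.
  by move=> _ [z hz <-]; exact: le_trans (gn z) hz.
by apply: (ub_le_sup hub); exists x; rewrite /= ?nx ?gx ?normr1.
Qed.

Lemma norming_functional_nonpos x z : finite_dim X -> `|x| = 1 ->
  (forall s, 0 < s -> 1 <= `|x - s *: z|) ->
  exists phi : X -> R, [/\ in_dual_sphere phi, phi x = 1 & phi z <= 0].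
Proof.
move=> fd nx hz.
have D0 : @dominated R X [set 0] (fun=> 0).
  split => //; first by move=> a u v -> ->; rewrite scaler0 addr0.
  by move=> a u v _ _; rewrite mulr0 addr0.
have [f1 [Df1 _ f1Nx]] := dominated_extend D0 (- x).
have {}f1Nx : f1 (- x) = -1.
  rewrite f1Nx; apply/le_anti/andP; split.
    by apply: (ext_value_le D0) => u ->; rewrite !sub0r opprK nx.
  by have := ext_value_ge D0 (- x) (erefl 0); rewrite !sub0r opprK nx.
have D1x : line_ext [set 0] (- x) (- x) by apply: line_ext_mem.
have f1s s : f1 (s *: x) = s.
  have -> : s *: x = (- s) *: (- x) by rewrite scaleNr scalerN opprK.
  by rewrite (dominatedZ Df1 _ D1x) f1Nx mulrN1 opprK.
have [f2 [Df2 f2E f2z]] := dominated_extend Df1 z.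
(* For s > 0, f1 (s x) - `|s x - z| = s (1 - `|x - s^-1 z|) <= 0. *)
have {}f2z : f2 z <= 0.
  rewrite f2z; apply: (ext_value_le Df1) => _ [_ -> [t _ <-]].
  rewrite add0r scalerN -scaleNr f1s; set s := - t.
  have [s0|s0] := lerP s 0; first by rewrite subr_le0 (le_trans s0).
  have -> : s *: x - z = s *: (x - s^-1 *: z).
    by rewrite scalerBr scalerA mulfV ?gt_eqF // scale1r.
  by rewrite normrZ gtr0_norm // subr_le0 ler_pMr // hz // invr_gt0.
have := dominated_memN Df1 D1x; rewrite opprK => Dx.
have [g [Dg gE]] := dominated_extend_total fd Df2.
have gx : g x = 1.
  rewrite gE; last exact: line_ext_sub.
  by rewrite f2E // -[x]scale1r f1s.
exists g; split => //; first exact: dominated_in_dual_sphere Dg nx gx.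
by rewrite gE //; apply: line_ext_mem; case: Df1.
Qed.

End HahnBanach.

Section Coordinates.
Variables (R : realType) (X : completeNormedModType R) (n : nat) (e : 'I_n -> X).
Hypothesis e_span : forall x : X, exists c : 'I_n -> R, x = \sum_(i < n) c i *: e i.

Definition lincomb (c : 'rV[R]_n) : X := \sum_(i < n) c ord0 i *: e i.

Lemma lincombZ a c : lincomb (a *: c) = a *: lincomb c.
Proof.
by rewrite /lincomb scaler_sumr; apply: eq_bigr => i _; rewrite !mxE scalerA.
Qed.

Lemma lincombB c d : lincomb (c - d) = lincomb c - lincomb d.
Proof.
by rewrite /lincomb -sumrB; apply: eq_bigr => i _; rewrite !mxE scalerBl.
Qed.

Lemma lincomb_surj x : exists c, x = lincomb c.
Proof.
have [c ->] := e_span x; exists (\row_i c i).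
by apply: eq_bigr => i _; rewrite mxE.
Qed.

Lemma lincomb_continuous : continuous lincomb.
Proof.
rewrite /lincomb; elim: (index_enum _) => [|i s IH].
  by under eq_fun do rewrite big_nil; exact: cst_continuous.
under eq_fun do rewrite big_cons.
move=> c; apply: continuousD (IH c).
exact/continuousZr_tmp/coord_continuous.
Qed.

Lemma closed_ball0E (k : R) (c : 'rV[R]_n) :
  0 < k -> closed_ball 0 k c = (`|c| <= k).
Proof. by move=> k0; rewrite closed_ballE //= /closed_ball_ /= sub0r normrN. Qed.

Lemma compact_lincomb_ball k : 0 < k -> compact (lincomb @` closed_ball 0 k).
Proof.
move=> k0; apply: continuous_compact.
  exact: continuous_subspaceT lincomb_continuous.
apply: bounded_closed_compact; last exact: closed_ball_closed.
exists k; split; first exact: num_real.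
by move=> M kM c; rewrite closed_ball0E // => /le_trans; apply; apply: ltW.
Qed.

(* Baire: X is the union of the closed sets lincomb @` closed_ball 0 k.+1. *)
Lemma lincomb_ball_interior : exists k p r,
  [/\ 0 < k, 0 < r & ball p r `<=` lincomb @` closed_ball 0 k].
Proof.
pose C (k : nat) := lincomb @` closed_ball 0 k.+1%:R.
have [k nd] : exists k, ~ dense (~` C k).
  apply: contrapT => hall.
  have dF : dense (\bigcap_k ~` C k).
    apply: Baire => k; split.
      apply: closed_openC; apply: compact_closed; first exact: norm_hausdorff.
      exact: compact_lincomb_ball.
    by apply: contrapT => hk; apply: hall; exists k.
  have [y [_ hy]] := dF setT (ex_intro _ 0 I) openT.
  have [c yc] := lincomb_surj y.
  apply: (hy (Num.truncn `|c|) I); exists c => //.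
  by rewrite closed_ball0E // ltW // truncnS_gt.
have [U [[p /open_nbhs_nbhs /nbhs_ballP [r r0 bpr]] UC]] := denseNE nd.
exists k.+1%:R, p, r; split => // y /bpr Uy.
by apply: contrapT => nCy; have : (U `&` ~` C k) y by []; rewrite UC.
Qed.

Lemma lincomb_ball0 : exists k r,
  [/\ 0 < k, 0 < r & ball 0 r `<=` lincomb @` closed_ball 0 k].
Proof.
have [k [p [r [k0 r0 pC]]]] := lincomb_ball_interior.
exists k, r; split => // a; rewrite -ball_normE /= sub0r normrN => ar.
have [c1 + e1] : (lincomb @` closed_ball 0 k) (p + a).
  by apply: pC; rewrite -ball_normE /= opprD addrA subrr sub0r normrN.
have [c2 + e2] : (lincomb @` closed_ball 0 k) (p - a).
  by apply: pC; rewrite -ball_normE /= opprB addrC subrK.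
rewrite !closed_ball0E // => c2k c1k.
exists (2^-1 *: (c1 - c2)).
  have := le_trans (ler_normB c1 c2) (lerD c1k c2k).
  rewrite closed_ball0E // normrZ gtr0_norm //; lra.
rewrite lincombZ lincombB e1 e2 opprB addrC addrA subrK -mulr2n.
by rewrite -[a *+ 2]scaler_nat scalerA mulVf ?scale1r // pnatr_eq0.
Qed.

Lemma bounded_sub_lincomb_ball M : exists K,
  0 < K /\ [set a | `|a| <= M] `<=` lincomb @` closed_ball 0 K.
Proof.
have [k [r [k0 r0 rC]]] := lincomb_ball0.
pose mu := r / (2 * (`|M| + 1)).
have mu0 : 0 < mu by rewrite divr_gt0 // mulr_gt0 // ltr_wpDl.
exists (mu^-1 * k); split => [|a /= aM]; first by rewrite mulr_gt0 ?invr_gt0.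
have [c + ec] : (lincomb @` closed_ball 0 k) (mu *: a).
  apply: rC; rewrite -ball_normE /= sub0r normrN normrZ gtr0_norm //.
  have aM1 : `|a| <= `|M| + 1.
    by rewrite (le_trans aM) // (le_trans (ler_norm M)) // lerDl.
  apply: le_lt_trans (ler_wpM2l (ltW mu0) aM1) _.
  have -> : mu * (`|M| + 1) = r / 2.
    by rewrite /mu; field; rewrite gt_eqF // ltr_wpDl.
  lra.
rewrite !closed_ball0E ?mulr_gt0 ?invr_gt0 // => ck.
exists (mu^-1 *: c); last by rewrite lincombZ ec scalerA mulVf ?gt_eqF ?scale1r.
rewrite closed_ball0E ?mulr_gt0 ?invr_gt0 // normrZ gtr0_norm ?invr_gt0 //.
by rewrite ler_pM2l ?invr_gt0.
Qed.

End Coordinates.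

Lemma compact_closure_bounded (R : realType) (X : completeNormedModType R)
    (A : set X) (M : R) :
  finite_dim X -> (forall a, A a -> `|a| <= M) -> compact (closure A).
Proof.
move=> [n [e e_span]] AM.
have [K [K0 AK]] := bounded_sub_lincomb_ball e_span M.
have cK : compact (lincomb e @` closed_ball 0 K) := compact_lincomb_ball K0.
apply: (subclosed_compact _ cK); first exact: closed_closure.
rewrite [X in _ `<=` X](closure_id _).1; last first.
  by apply: compact_closed cK; apply: norm_hausdorff.
by apply: closureS => a /AM; apply: AK.
Qed.

Lemma compact_increasing_cover (T : ptopologicalType) (K : set T)
    (F : nat -> set T) :
  compact K -> (forall j, open (F j)) -> {homo F : i j / (i <= j)%N >-> i `<=` j} ->
  K `<=` \bigcup_j F j -> exists N, K `<=` F N.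
Proof.
move=> cK Fo Fmono KF; rewrite compact_cover in cK.
have [D _ KD] := cK nat setT F (fun j _ => Fo j) KF.
exists (\max_(j <- finmap.enum_fset D) j)%N => k /KD [j jD Fjk].
by apply: Fmono Fjk; apply: (@leq_bigmax_seq _ _ xpredT id j jD).
Qed.

Section SubdifferentialSelection.
Variables (R : realType) (X : normedModType R).

Lemma linear_functional0 (f : X -> R) : is_linear_functional f -> f 0 = 0.
Proof.
move=> fl; have := fl 1 0 0; rewrite scaler0 addr0 mul1r => h.
by apply: (addrI (f 0)); rewrite addr0 -h.
Qed.

Lemma linear_functionalZ (f : X -> R) a u :
  is_linear_functional f -> f (a *: u) = a * f u.
Proof. by move=> fl; rewrite -[a *: u]addr0 fl linear_functional0 // addr0. Qed.

Lemma subdiff_norm_nonempty (w : X) :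
  finite_dim X -> w != 0 -> exists g, subdiff_norm w g.
Proof.
move=> fd w0; pose v := `|w|^-1 *: w.
have hz s : 0 < s -> 1 <= `|v - s *: 0| by rewrite scaler0 subr0 normfZV.
have [phi [[phil ? ?] pv _]] := norming_functional_nonpos fd (normfZV w0) hz.
exists phi; split => //.
have -> : w = `|w| *: v by rewrite scalerA mulfV ?normr_eq0 // scale1r.
by rewrite linear_functionalZ // pv mulr1 normrZ normr_id normfZV // mulr1.
Qed.

Lemma subdiff_selection_nonpos (I : Type) (x : I -> X) z : finite_dim X ->
  (forall i, exists g, subdiff_norm (x i) g /\ g z <= 0) ->
  exists phi, subdiff_selection phi /\ forall i, phi (x i) z <= 0.
Proof.
move=> fd hx.
have /choice[phi hphi] : forall w, exists g, (w != 0 -> subdiff_norm w g) /\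
    forall i, w = x i -> g z <= 0.
  move=> w; have [[i ->]|nxi] := pselect (exists i, w = x i).
    by have [g [? gz]] := hx i; exists g.
  have notx i : w <> x i by move=> wi; apply: nxi; exists i.
  have [->|w0] := eqVneq w 0; first by exists (fun=> 0); split => // i /notx.
  have [g hg] := subdiff_norm_nonempty fd w0.
  by exists g; split => // i /notx.
by exists phi; split => [w /(proj1 (hphi w))|i]; last exact: (proj2 (hphi _)).
Qed.

Lemma ball_cone_mono (x z : X) t t' : `|x| = 1 -> t <= t' ->
  ball (t *: x) t z -> ball (t' *: x) t' z.
Proof.
rewrite -!ball_normE /= => nx tt' h.
have -> : t' *: x - z = (t *: x - z) + (t' - t) *: x.
  by rewrite scalerBl addrCA addrAC subrr add0r.
apply: le_lt_trans (ler_normD _ _) _.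
rewrite normrZ nx mulr1 ger0_norm ?subr_ge0 //; lra.
Qed.

Lemma cone_ball_of_selections (I : Type) (x : I -> X) z :
  finite_dim X -> (forall i, `|x i| = 1) ->
  (forall phi, subdiff_selection phi -> exists i, 0 < phi (x i) z) ->
  exists i t, 0 < t /\ ball (t *: x i) t z.
Proof.
move=> fd nx hsel; apply: contrapT => nball.
have [phi [sphi phiz]] :
    exists phi, subdiff_selection phi /\ forall i, phi (x i) z <= 0.
  apply: subdiff_selection_nonpos => // i.
  have far s : 0 < s -> 1 <= `|x i - s *: z|.
    move=> s0; rewrite leNgt; apply/negP => lt1; apply: nball; exists i, s^-1.
    split; first by rewrite invr_gt0.
    rewrite -ball_normE /=.
    have -> : s^-1 *: x i - z = s^-1 *: (x i - s *: z).
      by rewrite scalerBr scalerA mulVf ?gt_eqF // scale1r.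
    rewrite normrZ gtr0_norm ?invr_gt0 //.
    by rewrite -[ltRHS]mulr1 ltr_pM2l // invr_gt0.
  have [g [gS gx gz]] := norming_functional_nonpos fd (nx i) far.
  by exists g; split => //; split => //; rewrite gx nx.
by have [i] := hsel phi sphi; rewrite ltNge phiz.
Qed.

End SubdifferentialSelection.

Theorem mainTheorem10 (R : realType) (X : completeNormedModType R)
  (A : set X) (m : nat) (I : finType) (x : I -> X) :
  @finite_dim R X ->
  (exists M : R, forall a, A a -> `|a| <= M) ->
  (exists delta : R, 0 < delta /\ forall a, A a -> delta <= `|a|) ->
  #|I| = m ->
  (forall i, unit_sphere (x i)) ->
  (forall phi : X -> (X -> R), subdiff_selection phi ->
     forall z, closure A z -> exists i : I, 0 < phi (x i) z) ->
  exists (y : I -> X) (r : I -> R),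
    (forall i, (exists t : R, 0 < t /\ y i = t *: x i) /\ 0 < r i /\ r i <= `|y i|) /\
    A `<=` \bigcup_(i in [set: I]) oball (y i) (r i).
Proof.
move=> fd [M AM] _ _ nx hsel.
pose F j := \bigcup_(i in [set: I]) ball (j.+1%:R *: x i) j.+1%:R.
have Fo j : open (F j) by apply: bigcup_open => i _; apply: ball_open.
have Fmono : {homo F : i j / (i <= j)%N >-> i `<=` j}.
  move=> j k jk z [i _ zi]; exists i => //.
  by apply: ball_cone_mono (nx i) _ zi; rewrite ler_nat.
have AF : closure A `<=` \bigcup_j F j.
  move=> z Az; have [i [t [t0 zi]]] :=
    cone_ball_of_selections fd nx (fun phi sphi => hsel phi sphi z Az).
  exists (Num.truncn t) => //; exists i => //.
  by apply: ball_cone_mono (nx i) _ zi; rewrite ltW ?truncnS_gt.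
have [N AN] := compact_increasing_cover (compact_closure_bounded fd AM) Fo Fmono AF.
exists (fun i => N.+1%:R *: x i), (fun=> N.+1%:R); split.
  by move=> i; split; [exists N.+1%:R | rewrite normrZ nx mulr1 ger0_norm].
move=> a /subset_closure /AN [i _ ai]; exists i => //.
by move: ai; rewrite -ball_normE.
Qed.
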